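(* Let $G$ be a graph on $[n]$ that is upper crossing closed with respect to a total order $\unlhd$ on $E(G)$, and order the atoms of $NC_G$ (the single-edge bonds, identified with the edges of $G$) by $\unlhd$. Then for every $k\ge 0$, the set of $k$-element non-bounded-below (NBB) sets of atoms of $NC_G$ equals the set of noncrossing NBC sets of $G$ with $k$ edges.
   Context: All graphs are finite simple graphs with vertex set $[n]=\{1,\dots,n\}$; edges are written $ij$ with $i<j$. Two edges $a_1a_2$ and $b_1b_2$ cross if $a_1<b_1<a_2<b_2$ or $b_1<a_1<b_2<a_2$. A spanning subgraph is identified with its edge set. A bond of $G$ is a spanning subgraph each of whose connected components is an induced subgraph of $G$; it is noncrossing if there are no two distinct components with vertex sets $B,B'$ and $a,c\in B$, $b,d\in B'$, $a<b<c<d$. $NC_G$ is the poset of noncrossing bonds ordered by inclusion of edge sets. Two crossing edges $e,f$ are crossing closed if among all induced connected subgraphs of $G$ containing $e$ and $f$ there is a unique minimal one under containment, denoted $J(e,f)$; $G$ is crossing closed if all pairs of crossing edges are (then $NC_G$ is a lattice). $G$ is upper crossing closed with respect to $\unlhd$ if it is crossing closed and for all crossing edges $e,f$, $J(e,f)$ contains an edge $h$ with $h\lhd e$ and $h\lhd f$. In a lattice $L$ with a partial order $\unlhd$ on its atoms, a set $S$ of atoms is bounded below if there is an atom $a$ with $a\lhd s$ for all $s\in S$ and $a<\bigvee S$; a set of atoms is NBB if it contains no bounded-below subset. Given $\unlhd$, a broken circuit is the edge set of a cycle of $G$ with its smallest edge removed; an NBC set is a set of edges containing no broken circuit; a noncrossing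 NBC set is an NBC set no two of whose edges cross. *)

From mathcomp Require Import all_boot.
Set Implicit Arguments. Unset Strict Implicit. Unset Printing Implicit Defensive.

(* Vertices are 'I_n (standing for [n]); an edge ij with i<j is the pair (i,j). *)
Definition edge (n : nat) := ('I_n * 'I_n)%type.

Definition simple_graph n (E : {set edge n}) : Prop :=
  forall e, e \in E -> (e.1 < e.2)%N.

Definition cross n (e f : edge n) : bool :=
  ((e.1 < f.1) && (f.1 < e.2) && (e.2 < f.2))%N ||
  ((f.1 < e.1) && (e.1 < f.2) && (f.2 < e.2))%N.

Definition adj n (F : {set edge n}) : rel 'I_n :=
  fun u v => ((u, v) \in F) || ((v, u) \in F).

Definition comp n (F : {set edge n}) (x : 'I_n) : {set 'I_n} :=
  [set y | connect (adj F) x y].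

(* F is a bond of G: F is a spanning subgraph (F ⊆ E) each of whose connected
   components is an induced subgraph of G. *)
Definition bond n (E F : {set edge n}) : Prop :=
  F \subset E /\
  forall x : 'I_n,
    [set e in E | (e.1 \in comp F x) && (e.2 \in comp F x)] \subset F.

Definition nc_bond n (E F : {set edge n}) : Prop :=
  bond E F /\
  forall x y : 'I_n, comp F x != comp F y ->
    ~ (exists a b c d : 'I_n,
         [/\ a \in comp F x, c \in comp F x, b \in comp F y, d \in comp F y &
             ((a < b) && (b < c) && (c < d))%N]).

Definition induced_rel n (E : {set edge n}) (W : {set 'I_n}) : rel 'I_n :=
  fun u v => [&& u \in W, v \in W & adj E u v].

Definition induced_connected n (E : {set edge n}) (W : {set 'I_n}) : Prop :=
  W != set0 /\ forall u v, u \in W -> v \in W -> connect (induced_rel E W) u v.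

Definition icon_contains n (E : {set edge n}) (e f : edge n) (W : {set 'I_n}) : Prop :=
  induced_connected E W /\ [/\ e.1 \in W, e.2 \in W, f.1 \in W & f.2 \in W].

Definition icon_minimal n (E : {set edge n}) (e f : edge n) (W : {set 'I_n}) : Prop :=
  icon_contains E e f W /\
  forall W' : {set 'I_n}, icon_contains E e f W' -> W' \subset W -> W' = W.

Definition is_J n (E : {set edge n}) (e f : edge n) (W : {set 'I_n}) : Prop :=
  icon_minimal E e f W /\ forall W' : {set 'I_n}, icon_minimal E e f W' -> W' = W.

Definition crossing_closed n (E : {set edge n}) : Prop :=
  forall e f, e \in E -> f \in E -> cross e f -> exists W, is_J E e f W.

Definition slt n (ord : rel (edge n)) (a b : edge n) : bool := ord a b && (a != b).

Definition total_order_on n (E : {set edge n}) (ord : rel (edge n)) : Prop :=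
  [/\ forall a, a \in E -> ord a a,
      forall a b, a \in E -> b \in E -> ord a b -> ord b a -> a = b,
      forall a b c, a \in E -> b \in E -> c \in E -> ord a b -> ord b c -> ord a c
    & forall a b, a \in E -> b \in E -> ord a b || ord b a].

Definition upper_crossing_closed n (E : {set edge n}) (ord : rel (edge n)) : Prop :=
  crossing_closed E /\
  forall e f, e \in E -> f \in E -> cross e f ->
    forall W, is_J E e f W ->
      exists h, [/\ h \in E, h.1 \in W, h.2 \in W, slt ord h e & slt ord h f].

Definition is_join n (E T J : {set edge n}) : Prop :=
  nc_bond E J /\ T \subset J /\
  forall K : {set edge n}, nc_bond E K -> T \subset K -> J \subset K.

Definition bounded_below n (E : {set edge n}) (ord : rel (edge n)) (T : {set edge n}) : Prop :=
  exists a, a \in E /\ (forall t, t \in T -> slt ord a t) /\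
    exists J, is_join E T J /\ [set a] \proper J.

Definition NBB n (E : {set edge n}) (ord : rel (edge n)) (S : {set edge n}) : Prop :=
  S \subset E /\ forall T : {set edge n}, T \subset S -> ~ bounded_below E ord T.

Definition mk_edge n (u v : 'I_n) : edge n := if (u < v)%N then (u, v) else (v, u).

Definition cycle_edges n (E : {set edge n}) (C : {set edge n}) : Prop :=
  exists s : seq 'I_n, [/\ uniq s, (3 <= size s)%N,
    C = [set:: [seq mk_edge p.1 p.2 | p <- zip s (rot 1 s)]] & C \subset E].

Definition broken_circuit n (E : {set edge n}) (ord : rel (edge n)) (B : {set edge n}) : Prop :=
  exists C m, [/\ cycle_edges E C, m \in C, (forall c, c \in C -> ord m c) & B = C :\ m].

Definition NBC n (E : {set edge n}) (ord : rel (edge n)) (S : {set edge n}) : Prop :=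
  S \subset E /\ forall B : {set edge n}, broken_circuit E ord B -> ~ (B \subset S).

Definition nc_NBC n (E : {set edge n}) (ord : rel (edge n)) (S : {set edge n}) : Prop :=
  NBC E ord S /\ forall e f, e \in S -> f \in S -> ~~ cross e f.

(* The join in NC_G of a noncrossing set T of atoms is its span, the set of
   edges of G whose endpoints are connected by T: the components of T are
   noncrossing, since two disjoint paths with interleaved endpoints
   a < b < c < d must contain crossing edges.  For crossing edges e and f the
   join of e and f is the set of edges induced on J(e, f): a noncrossing bond
   containing e and f has them in one induced connected component, which
   contains the unique minimal such vertex set J(e, f).
   Hence an NBB set S is noncrossing (crossing e, f in S would be bounded below
   by the edge h of J(e, f) below both) and NBC (a broken circuit in S is
   bounded below by the smallest edge of its cycle, which lies in its span).
   Conversely, if a subset T of a noncrossing NBC set were bounded below by a,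
   then a would lie in the join span(T), so a path in T joins the endpoints of
   a and closes with a to a cycle with smallest edge a, whose broken circuit
   lies in T. *)

From mathcomp Require Import all_boot zify.
From Stdlib Require Import Classical.

Set Implicit Arguments.
Unset Strict Implicit.
Unset Printing Implicit Defensive.

Lemma path_flips (T : eqType) (R : rel T) (f : T -> bool) x s :
  path R x s -> f x != f (last x s) ->
  exists u v, [/\ R u v, u \in x :: s, v \in x :: s & f u != f v].
Proof.
elim: s x => [|y s IHs] x /=; first by rewrite eqxx.
case/andP=> Rxy pys fxs; have [fxy | /negbNE/eqP fxy] := boolP (f x != f y).
  by exists x, y; rewrite !inE !eqxx orbT.
have /(IHs y pys)[u [v [Ruv us vs fuv]]] : f y != f (last y s) by rewrite -fxy.
by exists u, v; rewrite !(in_cons x) us vs !orbT.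
Qed.

Lemma proper_set1 (T : finType) (A : {set T}) a b :
  a \in A -> b \in A -> b != a -> [set a] \proper A.
Proof. by move=> aA bA ba; rewrite properE sub1set aA; apply/subsetPn; exists b; rewrite ?inE. Qed.

Section Zip.
Variables S T : Type.
Implicit Types (s : seq S) (t : seq T).

Lemma drop_zip s t i : drop i (zip s t) = zip (drop i s) (drop i t).
Proof. by elim: s t i => [|x s IHs] [|y t] [|i] //=; case: (drop _ _). Qed.

Lemma take_zip s t i : take i (zip s t) = zip (take i s) (take i t).
Proof. by elim: s t i => [|x s IHs] [|y t] [|i] //=; rewrite ?IHs //; case: (take _ _). Qed.

Lemma zip_rot s t i : size s = size t -> zip (rot i s) (rot i t) = rot i (zip s t).
Proof. by move=> st; rewrite /rot zip_cat ?size_drop ?st // drop_zip take_zip. Qed.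

End Zip.

Lemma zip_cons_rcons (T : Type) (x : T) p y :
  zip (x :: p) (rcons p y) = rcons (zip (x :: p) p) (last x p, y).
Proof. by elim: p x => [|z p IHp] x //=; rewrite IHp. Qed.

Lemma path_zipE (T : Type) (R : rel T) x p :
  path R x p = all [pred z | R z.1 z.2] (zip (x :: p) p).
Proof. by elim: p x => [|y p IHp] x //=; rewrite IHp. Qed.

Lemma rcons_path_zipE (T : Type) (R : rel T) x p y :
  path R x (rcons p y) = all [pred z | R z.1 z.2] (zip (x :: p) (rcons p y)).
Proof. by rewrite rcons_path zip_cons_rcons all_rcons path_zipE andbC. Qed.

Section CrossingPaths.
Variable n : nat.
Implicit Types p q u v : 'I_n.

(* For [u] distinct from [p] and [q], [between p q u] says that [u] lies
   strictly between [p] and [q]. *)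
Definition between p q u : bool := (p < u) (+) (q < u).

Lemma between_flip p q u v :
  (between p q u != between p q v) = ((p < u) (+) (p < v) != (q < u) (+) (q < v)).
Proof. by rewrite /between; case: (p < u); case: (q < u); case: (p < v); case: (q < v). Qed.

Lemma cross_of_between p q u v : u != p -> u != q -> v != p -> v != q ->
  between p q u != between p q v -> cross (mk_edge p q) (mk_edge u v).
Proof.
rewrite /between /cross /mk_edge -!(inj_eq val_inj).
case: ifP => pq; case: ifP => uv /=; move: pq uv;
move: (nat_of_ord p) (nat_of_ord q) (nat_of_ord u) (nat_of_ord v) => a b c d pq uv.
all: case: (ltngtP a c) => // ac _; case: (ltngtP b c) => // bc _;
case: (ltngtP a d) => // ad _; case: (ltngtP b d) => // bd _; lia.
Qed.

Lemma disjoint_paths_cross (R : rel 'I_n) a P b Q :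
  path R a P -> path R b Q -> {in a :: P & b :: Q, forall z w, z != w} ->
  a < b -> b < last a P -> last a P < last b Q ->
  exists p q u v, [/\ R p q, R u v & cross (mk_edge p q) (mk_edge u v)].
Proof.
(* The side of [between a c] flips along an edge [uv] of [Q]; then the parity
   of [(x < u) (+) (x < v)] flips along an edge [pq] of [P]. *)
move=> pP pQ PQ ab bc cd; set c := last a P in bc cd.
have [u [v [Ruv uQ vQ]]] : exists u v,
    [/\ R u v, u \in b :: Q, v \in b :: Q & between a c u != between a c v].
  apply: path_flips pQ _.
  by rewrite /between ab (ltn_trans ab (ltn_trans bc cd)) cd ltnNge (ltnW bc).
rewrite between_flip => acuv.
have [p [q [Rpq pP' qP' pquv]]] := path_flips (f := fun x : 'I_n => (x < u) (+) (x < v)) pP acuv.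
exists p, q, u, v; split=> //; apply: cross_of_between; rewrite ?between_flip //.
all: by rewrite eq_sym PQ.
Qed.
End CrossingPaths.

Section Adjacency.
Variable n : nat.
Implicit Types (F K : {set edge n}) (e : edge n) (u v x y z : 'I_n).

Lemma adj_sym F : symmetric (adj F).
Proof. by move=> u v; rewrite /adj orbC. Qed.

Lemma connect_adj_sym F : connect_sym (adj F).
Proof. exact/sym_connect_sym/adj_sym. Qed.

Lemma adj_subset F K : F \subset K -> subrel (adj F) (adj K).
Proof. by move=> /subsetP FK u v; rewrite /adj => /orP[/FK | /FK] ->; rewrite ?orbT. Qed.

Lemma edge_adj F e : e \in F -> adj F e.1 e.2.
Proof. by rewrite /adj -surjective_pairing => ->. Qed.

Lemma mk_edgeC u v : mk_edge u v = mk_edge v u.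
Proof. by rewrite /mk_edge; case: ltngtP => // /val_inj ->. Qed.

Lemma mk_edge_proj e : e.1 < e.2 -> mk_edge e.1 e.2 = e.
Proof. by rewrite /mk_edge => ->; case: e. Qed.

Lemma mk_edge_adj F u v : mk_edge u v \in F -> adj F u v.
Proof. by rewrite /mk_edge /adj; case: ifP => _ ->; rewrite ?orbT. Qed.

Lemma connect_mk_edge F u v :
  connect (adj F) (mk_edge u v).1 (mk_edge u v).2 = connect (adj F) u v.
Proof. by rewrite /mk_edge; case: ifP; rewrite //= connect_adj_sym. Qed.

Lemma mk_edge_inj u v u' v' : mk_edge u v = mk_edge u' v' ->
  (u = u' /\ v = v') \/ (u = v' /\ v = u').
Proof. by rewrite /mk_edge; do 2 case: ifP => _; case=> -> ->; auto. Qed.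

Lemma simple_graph_subset F K : K \subset F -> simple_graph F -> simple_graph K.
Proof. by move=> /subsetP KF sF e /KF /sF. Qed.

Lemma adj_mk_edge F u v : simple_graph F -> adj F u v -> mk_edge u v \in F.
Proof.
move=> sF /orP[] uvF; have /= uv := sF _ uvF.
  by rewrite /mk_edge uv.
by rewrite mk_edgeC /mk_edge uv.
Qed.

Lemma comp_eq F x y : connect (adj F) x y -> comp F x = comp F y.
Proof.
by move=> xy; apply/setP => z; rewrite !inE (same_connect (connect_adj_sym F) xy).
Qed.

Lemma connect_comp F x y z : y \in comp F x -> z \in comp F x -> connect (adj F) y z.
Proof. by rewrite !inE connect_adj_sym => xy; apply: connect_trans. Qed.

Lemma comp_refl F x : x \in comp F x.
Proof. by rewrite inE connect0. Qed.

Lemma edge_comp F e : e \in F -> e.2 \in comp F e.1.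
Proof. by move=> eF; rewrite inE connect1 ?edge_adj. Qed.

End Adjacency.

Definition noncrossing n (S : {set edge n}) := {in S &, forall e f, ~~ cross e f}.

Definition noncrossing_comps n (F : {set edge n}) :=
  forall x y : 'I_n, comp F x != comp F y ->
    ~ (exists a b c d : 'I_n,
         [/\ a \in comp F x, c \in comp F x, b \in comp F y, d \in comp F y &
             ((a < b) && (b < c) && (c < d))%N]).

Lemma noncrossingS n (S T : {set edge n}) : T \subset S -> noncrossing S -> noncrossing T.
Proof. by move=> /subsetP TS ncS e f /TS eS /TS fS; apply: ncS. Qed.

Lemma noncrossing_comps_cross n (K : {set edge n}) e f :
  noncrossing_comps K -> e \in K -> f \in K -> cross e f -> comp K e.1 = comp K f.1.
Proof.
move=> ncK eK fK; have [// | neq] := eqVneq (comp K e.1) (comp K f.1).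
have [e2 f2] := (edge_comp eK, edge_comp fK).
rewrite /cross => /orP[] /andP[/andP[lt1 lt2] lt3]; exfalso.
  by apply: (ncK _ _ neq); exists e.1, f.1, e.2, f.2; rewrite !comp_refl e2 f2 lt1 lt2 lt3.
rewrite eq_sym in neq; apply: (ncK _ _ neq).
by exists f.1, e.1, f.2, e.2; rewrite !comp_refl e2 f2 lt1 lt2 lt3.
Qed.

Lemma noncrossing_edges_comps n (T : {set edge n}) :
  simple_graph T -> noncrossing T -> noncrossing_comps T.
Proof.
move=> sT ncT x y xy [a [b [c [d [ax cx bY dY /andP[/andP[ab bc] cd]]]]]].
have /connectP[P pP ?] := connect_comp ax cx; subst c.
have /connectP[Q pQ ?] := connect_comp bY dY; subst d.
have PQ : {in a :: P & b :: Q, forall z w, z != w}.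
  move=> z w zP wQ; apply: contra_neq xy => zw.
  rewrite inE in ax; rewrite inE in bY.
  rewrite (comp_eq (connect_trans ax (path_connect pP zP))).
  by rewrite (comp_eq (connect_trans bY (path_connect pQ wQ))) zw.
have [p [q [u [v [Tpq Tuv pquv]]]]] := disjoint_paths_cross pP pQ PQ ab bc cd.
by have := ncT _ _ (adj_mk_edge sT Tpq) (adj_mk_edge sT Tuv); rewrite pquv.
Qed.

Section Span.
Variables (n : nat) (E : {set edge n}).
Hypothesis simpleE : simple_graph E.
Implicit Types (K T : {set edge n}) (e : edge n).

Definition span T := [set e in E | connect (adj T) e.1 e.2].

Lemma subset_span T : T \subset E -> T \subset span T.
Proof.
by move=> /subsetP TE; apply/subsetP => e eT; rewrite inE TE //= connect1 ?edge_adj.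
Qed.

Lemma connect_span T : T \subset E -> connect (adj (span T)) =2 connect (adj T).
Proof.
move=> TE x y; apply/idP/idP; apply: connect_sub => u v.
  by rewrite /adj !inE => /orP[]/andP[_] //; rewrite connect_adj_sym.
by move/(adj_subset (subset_span TE)); apply: connect1.
Qed.

Lemma comp_span T : T \subset E -> comp (span T) =1 comp T.
Proof. by move=> TE x; apply/setP => y; rewrite !inE connect_span. Qed.

Lemma span_bond T : T \subset E -> bond E (span T).
Proof.
move=> TE; split=> [|x]; first by apply/subsetP => e; rewrite inE => /andP[].
apply/subsetP => e; rewrite !comp_span // !inE => /and3P[eE x1 x2].
by rewrite eE (connect_comp (x := x)) ?inE.
Qed.

Lemma span_min T K : bond E K -> T \subset K -> span T \subset K.
Proof.
case=> _ Kbond TK; apply/subsetP => e; rewrite inE => /andP[eE Te].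
apply: (subsetP (Kbond e.1)); rewrite !inE eE connect0 /=.
exact: connect_sub (fun u v uv => connect1 (adj_subset TK uv)) _ _ Te.
Qed.

Lemma span_join T : T \subset E -> noncrossing T -> is_join E T (span T).
Proof.
move=> TE ncT; split; last by split=> [|K [Kbond _]]; [apply: subset_span | apply: span_min].
suff ncspan : noncrossing_comps (span T) by split; [apply: span_bond | exact: ncspan].
have ncT' := noncrossing_edges_comps (simple_graph_subset TE simpleE) ncT.
by move=> x y; rewrite !comp_span //; apply: ncT'.
Qed.

End Span.

Section CrossingJoin.
Variables (n : nat) (E : {set edge n}).
Hypothesis simpleE : simple_graph E.
Implicit Types (K : {set edge n}) (W B : {set 'I_n}) (e f g : edge n).

Definition induced_edges W := [set g in E | (g.1 \in W) && (g.2 \in W)].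

Lemma connect_induced_edges W x y :
  connect (adj (induced_edges W)) x y -> x = y \/ (x \in W /\ y \in W).
Proof.
case/connectP=> p + ->{y}; elim: p x => [|z p IHp] x /=; first by left.
case/andP=> xz /IHp zp; right.
have [xW zW] : x \in W /\ z \in W by case/orP: xz; rewrite inE => /and3P[].
by case: zp => [<- | []].
Qed.

Lemma induced_edges_bond W : bond E (induced_edges W).
Proof.
split=> [|x]; first by apply/subsetP => g; rewrite inE => /andP[].
apply/subsetP => g; rewrite !inE => /and3P[gE /connect_induced_edges g1 /connect_induced_edges g2].
rewrite gE /=; have := simpleE gE.
by case: g1 g2 => [-> [-> | [-> ->]] | [xW ->] [<- | [_ ->]]]; rewrite ?ltnn ?xW.
Qed.

Lemma induced_edges_noncrossing_comps W :
  induced_connected E W -> noncrossing_comps (induced_edges W).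
Proof.
move=> [_ Wconn] x y xy [a [b [c [d [ax cx bY dY /andP[/andP[ab bc] cd]]]]]].
have inW z u v : u \in comp (induced_edges W) z -> v \in comp (induced_edges W) z ->
    u < v -> z \in W.
  rewrite !inE => /connect_induced_edges[<- | [] //] /connect_induced_edges[<- | [] //].
  by rewrite ltnn.
move/negP: xy; apply; apply/eqP/comp_eq.
apply: connect_sub (Wconn _ _ (inW _ _ _ ax cx (ltn_trans ab bc)) (inW _ _ _ bY dY (ltn_trans bc cd))).
move=> u v /and3P[uW vW /orP[] uvE]; apply: connect1; by rewrite /adj !inE uvE uW vW ?orbT.
Qed.

Lemma exists_icon_minimal e f B :
  icon_contains E e f B -> exists2 W : {set 'I_n}, W \subset B & icon_minimal E e f W.
Proof.
elim: {B}#|B| {-2}B (leqnn #|B|) => [|k IHk] B.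
  by rewrite leqn0 cards_eq0 => /eqP-> [[/eqP]].
move=> Bk eB; have [minB | nminB] := classic (icon_minimal E e f B); first by exists B.
have [W [eW WB WnB]] : exists W : {set 'I_n}, [/\ icon_contains E e f W, W \subset B & W != B].
  apply: NNPP => noW; apply: nminB; split=> // W eW WB.
  by apply: NNPP => WnB; apply: noW; exists W; split=> //; apply/eqP.
have Wk : #|W| <= k by rewrite -ltnS (leq_trans (proper_card _) Bk) // properEneq WnB WB.
by have [W' W'W minW'] := IHk W Wk eW; exists W' => //; apply: subset_trans W'W WB.
Qed.

Lemma comp_induced_connected K x : K \subset E -> induced_connected E (comp K x).
Proof.
move=> KE; split=> [|u v uK vK]; first by apply/set0Pn; exists x; apply: comp_refl.
have /connectP[p pp ->] := connect_comp uK vK; apply/connectP; exists p => //.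
apply: (sub_in_path (P := [in comp K x])) (pp).
  by move=> u' v' u'K v'K /(adj_subset KE) uv'; apply/and3P.
apply/allP => z /(path_connect pp) uz; rewrite inE in uK.
by rewrite inE (connect_trans uK uz).
Qed.

Lemma comp_icon_contains K e f : nc_bond E K -> e \in K -> f \in K -> cross e f ->
  icon_contains E e f (comp K e.1).
Proof.
move=> [[KE _] ncK] eK fK ef; split; first exact: comp_induced_connected.
have efK := noncrossing_comps_cross ncK eK fK ef.
by rewrite comp_refl (edge_comp eK) efK comp_refl (edge_comp fK).
Qed.

Lemma is_J_join e f W : e \in E -> f \in E -> cross e f -> is_J E e f W ->
  is_join E [set e; f] (induced_edges W).
Proof.
move=> eE fE ef [[[[Wn Wconn] [e1 e2 f1 f2]] _] uniqW]; split.
  split; first exact: induced_edges_bond.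
  by have := induced_edges_noncrossing_comps (conj Wn Wconn).
split; first by apply/subsetP => g; rewrite !inE => /orP[]/eqP->; rewrite ?eE ?fE ?e1 ?e2 ?f1 ?f2.
move=> K ncK /subsetP efK.
have eK : e \in K by apply: efK; rewrite !inE eqxx.
have fK : f \in K by apply: efK; rewrite !inE eqxx orbT.
have [W' W'K minW'] := exists_icon_minimal (comp_icon_contains ncK eK fK ef).
rewrite -(uniqW _ minW'); apply/subsetP => g; rewrite inE => /and3P[gE g1 g2].
by case: ncK => [[_ /(_ e.1)/subsetP Kb] _]; apply: Kb; rewrite inE gE !(subsetP W'K).
Qed.

End CrossingJoin.

Section Cycles.
Variable n : nat.
Implicit Types (s p : seq 'I_n) (x y w : 'I_n).

Definition cycle_set s : {set edge n} := [set:: [seq mk_edge z.1 z.2 | z <- zip s (rot 1 s)]].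

Lemma cycle_set_rot s i : cycle_set (rot i s) = cycle_set s.
Proof.
by apply/setP => e; rewrite !inE rot_rot zip_rot ?size_rot // map_rot mem_rot.
Qed.

Lemma mem_cycle_set_cons x p e : (e \in cycle_set (x :: p)) =
  (e == mk_edge (last x p) x) || (e \in [seq mk_edge z.1 z.2 | z <- zip (x :: p) p]).
Proof. by rewrite inE rot1_cons zip_cons_rcons map_rcons mem_rcons inE. Qed.

Lemma cycle_tail_edges x y w p : uniq [:: x, y, w & p] ->
  {in zip [:: y, w & p] (rcons (w :: p) x), forall z,
    mk_edge z.1 z.2 \in cycle_set [:: x, y, w & p] :\ mk_edge x y}.
Proof.
rewrite [uniq _]/= in_cons negb_or => /and3P[/andP[xy xwp] ywp _] z zP.
rewrite in_setD1 /cycle_set inE rot1_cons /= in_cons (map_f _ zP) !orbT andbT.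
apply/eqP => /mk_edge_inj; move: zP; rewrite inE => /orP[/eqP-> /= | zP].
  by case=> -[yx wx]; [move: xy | move: xwp]; rewrite ?yx -?wx ?eqxx ?mem_head.
have : z.1 \in w :: p.
  by rewrite -[w :: p](@unzip1_zip _ _ _ (rcons p x)) ?size_rcons // map_f.
by move=> z1 [] [z1E _]; [move: xwp | move: ywp]; rewrite -z1E z1.
Qed.

Lemma cycle_set_connect s e : uniq s -> 3 <= size s -> e \in cycle_set s ->
  connect (adj (cycle_set s :\ e)) e.1 e.2 /\ cycle_set s :\ e != set0.
Proof.
move=> us s3; rewrite inE => /mapP[z zs ->].
have [i L rotz] := rot_to zs; rewrite -(cycle_set_rot s i).
have : zip (rot i s) (rot 1 (rot i s)) = z :: L by rewrite rot_rot zip_rot ?size_rot.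
rewrite -(rot_uniq i) -(size_rot i) in us s3.
case: (rot i s) us s3 => [|x [|y [|w p]]] // us _; rewrite rot1_cons /= => -[<- _] /=.
have Cxy := cycle_tail_edges us; split.
  rewrite connect_mk_edge connect_adj_sym; apply/connectP.
  exists (rcons (w :: p) x); last by rewrite last_rcons.
  by rewrite rcons_path_zipE; apply/allP => q /Cxy /mk_edge_adj.
by apply/set0Pn; exists (mk_edge y w); apply: (Cxy (y, w)); rewrite inE eqxx.
Qed.

End Cycles.

Section BrokenCircuits.
Variables (n : nat) (E : {set edge n}) (ord : rel (edge n)).
Hypothesis simpleE : simple_graph E.
Implicit Types (T B : {set edge n}) (a : edge n).

Lemma broken_circuit_connect B : broken_circuit E ord B ->
  exists m, [/\ m \in E, connect (adj B) m.1 m.2, B != set0 & {in B, forall c, slt ord m c}].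
Proof.
case=> C [m [[s [us s3 -> CE]] mC mmin ->]].
have [conn Cm] := cycle_set_connect us s3 mC.
exists m; split=> //; first exact: (subsetP CE).
by move=> c; rewrite in_setD1 => /andP[cm cC]; rewrite /slt mmin // eq_sym.
Qed.

Lemma broken_circuit_of_connect T a : T \subset E -> a \in E -> ord a a ->
  {in T, forall t, slt ord a t} -> connect (adj T) a.1 a.2 ->
  exists2 B, broken_circuit E ord B & B \subset T.
Proof.
move=> TE aE oaa oaT /connectP[p pp ep].
have aT : a \notin T by apply/negP => /oaT; rewrite /slt eqxx andbF.
have sT := simple_graph_subset TE simpleE; have a12 := simpleE aE.
case: (shortenP pp) ep => {p pp}p pp up _ ep.
have pT : {in zip (a.1 :: p) p, forall z, mk_edge z.1 z.2 \in T}.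
  by move: pp; rewrite path_zipE => /allP pT z /pT /adj_mk_edge; apply.
have memC c : c \in cycle_set (a.1 :: p) -> c = a \/ c \in T.
  rewrite mem_cycle_set_cons -ep mk_edgeC mk_edge_proj //.
  by case/orP=> [/eqP | /mapP[z /pT zT ->]]; [left | right].
have p3 : 3 <= size (a.1 :: p).
  case: p {up memC pT} pp ep => [|y [|? ?]] //= => [_ a21 | /andP[Ty _] ya2].
    by move: a12; rewrite a21 ltnn.
  by rewrite -(mk_edge_proj a12) ya2 (adj_mk_edge sT Ty) in aT.
exists (cycle_set (a.1 :: p) :\ a); last first.
  by apply/subsetP => c; rewrite in_setD1 => /andP[ca /memC[/eqP | //]]; rewrite (negbTE ca).
exists (cycle_set (a.1 :: p)), a; split=> //.
- exists (a.1 :: p); split=> //; apply/subsetP => c /memC[-> // | /(subsetP TE)//].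
- by rewrite mem_cycle_set_cons -ep mk_edgeC mk_edge_proj ?eqxx.
- by move=> c /memC[-> // | /oaT/andP[]].
Qed.

End BrokenCircuits.

Section NBB.
Variables (n : nat) (E : {set edge n}) (ord : rel (edge n)).
Hypothesis simpleE : simple_graph E.
Implicit Type S : {set edge n}.

Lemma NBB_noncrossing S : upper_crossing_closed E ord -> NBB E ord S -> noncrossing S.
Proof.
move=> [ccE uccE] [/subsetP SE nbb] e f eS fS; apply/negP => ef.
have [eE fE] := (SE e eS, SE f fS).
have [W JW] := ccE e f eE fE ef.
have [h [hE h1 h2 he hf]] := uccE e f eE fE ef W JW.
have [[[_ [e1 e2 _ _]] _] _] := JW.
apply: (nbb [set e; f]); first by apply/subsetP => g; rewrite !inE => /orP[]/eqP->.
exists h; split=> //; split; first by move=> t; rewrite !inE => /orP[]/eqP->.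
exists (induced_edges E W); split; first exact: is_J_join.
apply: (proper_set1 (b := e)); rewrite ?inE ?hE ?h1 ?h2 ?eE ?e1 ?e2 //.
by move: he; rewrite /slt eq_sym => /andP[].
Qed.

Lemma NBB_NBC S : NBB E ord S -> noncrossing S -> NBC E ord S.
Proof.
move=> [SE nbb] ncS; split=> // B bcB BS.
have [m [mE conn /set0Pn[t tB] mmin]] := broken_circuit_connect bcB.
have BE := subset_trans BS SE.
apply: (nbb B BS); exists m; split=> //; split=> //.
exists (span E B); split; first exact: span_join (noncrossingS BS ncS).
apply: (proper_set1 (b := t)); first by rewrite inE mE.
  exact: subsetP (subset_span BE) _ tB.
by move: (mmin t tB); rewrite /slt eq_sym => /andP[].
Qed.

Lemma nc_NBC_NBB S : {in E, forall a, ord a a} -> nc_NBC E ord S -> NBB E ord S.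
Proof.
move=> ordR [[SE nbc] ncS]; split=> // T TS [a [aE [aT [J [[_ [_ Jmin]] aJ]]]]].
have TE := subset_trans TS SE; have [ncT [Tspan _]] := span_join simpleE TE (noncrossingS TS ncS).
have := subsetP (Jmin _ ncT Tspan) a (proper1set aJ); rewrite inE aE /= => conn.
have [B bcB BT] := broken_circuit_of_connect simpleE TE aE (ordR a aE) aT conn.
exact: nbc bcB (subset_trans BT TS).
Qed.

End NBB.

Theorem lemma3p9 (n : nat) (E : {set edge n}) (ord : rel (edge n)) :
  simple_graph E ->
  total_order_on E ord ->
  upper_crossing_closed E ord ->
  forall (k : nat) (S : {set edge n}),
    #|S| = k -> (NBB E ord S <-> nc_NBC E ord S).
Proof.
move=> simpleE [ordR _ _ _] uccE k S _; split; last exact: (nc_NBC_NBB simpleE ordR).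
move=> nbbS; have ncS := NBB_noncrossing simpleE uccE nbbS.
by split; [apply: NBB_NBC | apply: ncS].
Qed.
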